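(* There exist a connected graph $G$ of order $n\geq 2$ and a graph $H$ with connected components $H_1,\dots,H_k$ such that $\chi_L(G\odot H)=\max\{\chi_L(H_t+K_1)\mid 1\leq t\leq k\}$.
   Context: All graphs are finite and simple. A $k$-coloring of a connected graph $G$ is a map $c:V(G)\to\{1,\dots,k\}$ with $c(u)\neq c(v)$ for adjacent $u,v$; it induces the partition $\Pi=\{C_1,\dots,C_k\}$ into color classes $C_i=c^{-1}(i)$. The color code of $v$ is $c_\Pi(v)=(d(v,C_1),\dots,d(v,C_k))$ with $d(v,C_i)=\min\{d(v,x): x\in C_i\}$ (graph distance). $c$ is a locating coloring if distinct vertices have distinct color codes; the locating-chromatic number $\chi_L(G)$ is the least $k$ for which a locating $k$-coloring exists. The corona product $G\odot H$ of a graph $G$ with vertex set $\{a_1,\dots,a_n\}$ and a graph $H$ is obtained from one copy of $G$ and $n$ disjoint copies of $H$ by joining $a_i$ to every vertex of the $i$-th copy of $H$. For a graph $F$, $F+K_1$ denotes the join of $F$ with a single new vertex adjacent to all vertices of $F$. *)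

From mathcomp Require Import all_boot.
Set Implicit Arguments. Unset Strict Implicit. Unset Printing Implicit Defensive.

Definition simple_graph (T : finType) (e : rel T) : Prop :=
  irreflexive e /\ symmetric e.

Definition connected_graph (T : finType) (e : rel T) : Prop :=
  forall u v : T, connect e u v.

Fixpoint ball (T : finType) (e : rel T) (k : nat) (u : T) : {set T} :=
  match k with
  | 0 => [set u]
  | k'.+1 => let B := ball e k' u in B :|: [set y | [exists x in B, e x y]]
  end.

(* graph distance; equals #|T| when v is unreachable from u
   (never happens in the connected graphs used below) *)
Definition gdist (T : finType) (e : rel T) (u v : T) : nat :=
  find (fun k => v \in ball e k u) (iota 0 #|T|).

Definition gdist_set (T : finType) (e : rel T) (v : T) (C : {set T}) : nat :=
  \big[minn/#|T|]_(x in C) gdist e v x.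

Definition color_class (T : finType) (k : nat) (c : {ffun T -> 'I_k}) (i : 'I_k)
  : {set T} := [set x | c x == i].

Definition color_code (T : finType) (e : rel T) (k : nat) (c : {ffun T -> 'I_k})
  (v : T) : {ffun 'I_k -> nat} :=
  [ffun i => gdist_set e v (color_class c i)].

Definition locating_coloring (T : finType) (e : rel T) (k : nat)
  (c : {ffun T -> 'I_k}) : bool :=
  [&& [forall u, forall v, e u v ==> (c u != c v)],
      [forall i, color_class c i != set0] &
      [forall u, forall v, (color_code e c u == color_code e c v) ==> (u == v)]].

Definition loc_colorable (T : finType) (e : rel T) (k : nat) : bool :=
  [exists c : {ffun T -> 'I_k}, locating_coloring e c].

(* locating-chromatic number: least k admitting a locating k-coloring
   (k = #|T| always works, so the search range suffices) *)
Definition chiL (T : finType) (e : rel T) : nat :=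
  find (loc_colorable e) (iota 0 #|T|.+1).

(* corona product G ⊙ H: vertex set V(G) + V(G) x V(H) *)
Definition corona_rel (T U : finType) (e : rel T) (f : rel U) :
  rel (T + (T * U)) :=
  fun x y =>
    match x, y with
    | inl a, inl b => e a b
    | inl a, inr (b, _) => a == b
    | inr (a, _), inl b => a == b
    | inr (a, u), inr (b, v) => (a == b) && f u v
    end.

Definition components (U : finType) (f : rel U) : {set {set U}} :=
  [set [set y | connect f x y] | x : U].

(* H[C] + K_1: induced subgraph on C joined with a new vertex None *)
Definition cone_rel (U : finType) (f : rel U) (C : {set U}) :
  rel (option (sig (fun x : U => x \in C))) :=
  fun x y =>
    match x, y with
    | None, None => false
    | None, Some _ => true
    | Some _, None => true
    | Some a, Some b => f (val a) (val b)
    end.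

Definition chiL_cone (U : finType) (f : rel U) (C : {set U}) : nat :=
  @chiL (option (sig (fun x : U => x \in C))) (@cone_rel U f C).

(* Take G = K_2 and H = P_3, the star with centre None and leaves Some true
   and Some false.  A locating colouring gives distinct colours to adjacent
   vertices and to distinct twins (vertices with the same neighbourhood), since
   twins are equidistant from every other vertex and would otherwise share
   their colour code.  H + K_1 is K_4 minus the edge between two twins, so it
   needs 4 colours, as many as it has vertices.  In G ⊙ H a vertex of G
   together with the centre and the two leaves of its copy of H is again such
   a set, so 4 colours are needed there too; an explicit 4-colouring is
   locating because equally coloured vertices already differ in which colours
   occur in their closed neighbourhoods. *)

From mathcomp Require Import all_boot.

Set Implicit Arguments.
Unset Strict Implicit.
Unset Printing Implicit Defensive.

Section Distance.
Variables (T : finType) (e : rel T).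

Lemma mem_ball_self k u : u \in ball e k u.
Proof. by elim: k => [|k IHk] /=; rewrite !inE ?IHk. Qed.

Lemma mem_ball1 u v : (v \in ball e 1 u) = (v == u) || e u v.
Proof.
rewrite /= !inE; congr (_ || _); apply/existsP/idP => [[x /andP[]]|euv].
  by rewrite inE => /eqP->.
by exists u; rewrite inE eqxx.
Qed.

Lemma gdist_eq0 u v : (gdist e u v == 0) = (u == v).
Proof.
rewrite /gdist; have : 0 < #|T| by apply/card_gt0P; exists u.
case: #|T| => // n _ /=; rewrite inE [u == v]eq_sym.
by case: ifP.
Qed.

Lemma gdist_le1 u v : 1 < #|T| -> (gdist e u v <= 1) = (v == u) || e u v.
Proof.
rewrite /gdist; case: #|T| => [|[|n]] //= _.
rewrite -mem_ball1 inE; case: ifP => [/eqP->|_]; first by rewrite mem_ball_self.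
by case: ifP.
Qed.

Lemma bigminn_leq (I : eqType) (r : seq I) (P : pred I) (F : I -> nat) d m :
  (\big[minn/d]_(i <- r | P i) F i <= m) =
  (d <= m) || has (fun i => P i && (F i <= m)) r.
Proof.
elim: r => [|x r IHr]; first by rewrite big_nil orbF.
rewrite big_cons /=; case: (P x) => //=.
by rewrite geq_min IHr orbCA.
Qed.

Lemma gdist_set_leq v C m :
  (gdist_set e v C <= m) = (#|T| <= m) || [exists x in C, gdist e v x <= m].
Proof.
rewrite /gdist_set bigminn_leq; congr (_ || _).
by apply/hasP/existsP => [[x _ Hx]|[x Hx]]; exists x; rewrite ?mem_index_enum.
Qed.

Lemma gdist_set_eq0 v C : (gdist_set e v C == 0) = (v \in C).
Proof.
have T_gt0 : 0 < #|T| by apply/card_gt0P; exists v.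
rewrite -leqn0 gdist_set_leq leqNgt T_gt0 /=.
apply/existsP/idP => [[x /andP[Cx]]|Cv]; first by rewrite leqn0 gdist_eq0 => /eqP->.
by exists v; rewrite Cv leqn0 gdist_eq0 eqxx.
Qed.

Lemma gdist_set_le1 v C : 1 < #|T| ->
  (gdist_set e v C <= 1) = [exists x in C, (x == v) || e v x].
Proof.
move=> T_gt1; rewrite gdist_set_leq leqNgt T_gt1 /=.
by apply: eq_existsb => x; rewrite gdist_le1.
Qed.

Definition twins (u v : T) : Prop := forall y, e u y = e v y.

Lemma twins_mem_ball u v k y : twins u v ->
  y != u -> y != v -> y \in ball e k u -> y \in ball e k v.
Proof.
move=> tw; elim: k y => [|k IHk] y yu yv /=; first by rewrite !inE (negbTE yu).
rewrite !inE => /orP[/IHk->//|/existsP[x /andP[Bx exy]]].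
apply/orP; right; apply/existsP.
have [xu|xu] := eqVneq x u; first by exists v; rewrite mem_ball_self -tw -xu.
have [xv|xv] := eqVneq x v; first by exists v; rewrite mem_ball_self -xv.
by exists x; rewrite exy IHk.
Qed.

Lemma twins_gdist u v y : twins u v ->
  y != u -> y != v -> gdist e u y = gdist e v y.
Proof.
move=> tw yu yv; apply: eq_find => k /=.
by apply/idP/idP; apply: twins_mem_ball => // z; rewrite tw.
Qed.

End Distance.

Section LocatingColoring.
Variables (T : finType) (e : rel T) (k : nat) (c : {ffun T -> 'I_k}).

Lemma mem_color_class x : (x \in color_class c (c x)).
Proof. by rewrite inE. Qed.

Lemma color_code_neq u v : c u != c v -> color_code e c u != color_code e c v.
Proof.
move=> cuv; apply/negP => /eqP/ffunP/(_ (c u)); rewrite !ffunE => codes_eq.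
have := gdist_set_eq0 e v (color_class c (c u)).
by rewrite -codes_eq gdist_set_eq0 mem_color_class inE eq_sym (negbTE cuv).
Qed.

Definition nbhd_has_color (u : T) (i : 'I_k) : bool :=
  [exists x, (c x == i) && ((x == u) || e u x)].

Lemma nbhd_has_colorE u i : 1 < #|T| ->
  nbhd_has_color u i = (gdist_set e u (color_class c i) <= 1).
Proof.
by move=> T_gt1; rewrite gdist_set_le1 //; apply: eq_existsb => x; rewrite inE.
Qed.

Lemma color_code_neq_nbhd u v i : 1 < #|T| ->
  nbhd_has_color u i != nbhd_has_color v i -> color_code e c u != color_code e c v.
Proof.
move=> T_gt1; rewrite !nbhd_has_colorE //; apply: contra => /eqP/ffunP/(_ i).
by rewrite !ffunE => ->.
Qed.

Lemma locating_coloring_nbhd : 1 < #|T| ->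
  (forall u v, e u v -> c u != c v) -> (forall i, exists x, c x = i) ->
  (forall u v, c u == c v -> u != v ->
     exists i, nbhd_has_color u i != nbhd_has_color v i) ->
  locating_coloring e c.
Proof.
move=> T_gt1 proper onto separated; apply/and3P; split.
- by apply/forallP => u; apply/forallP => v; apply/implyP; apply: proper.
- apply/forallP => i; have [x cx] := onto i.
  by apply/set0Pn; exists x; rewrite inE cx.
apply/forallP => u; apply/forallP => v; apply/implyP; apply: contraLR => uv.
have [cuv|] := eqVneq (c u) (c v); last exact: color_code_neq.
by have [i] := separated u v (introT eqP cuv) uv; apply: color_code_neq_nbhd.
Qed.

Hypothesis c_loc : locating_coloring e c.

Lemma locating_proper u v : e u v -> c u != c v.
Proof. by case/and3P: c_loc => /forallP/(_ u)/forallP/(_ v)/implyP. Qed.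

Lemma locating_twins u v : u != v -> twins e u v -> c u != c v.
Proof.
case/and3P: c_loc => _ _ /forallP/(_ u)/forallP/(_ v)/implyP codes_inj uv tw.
apply: contra uv => /eqP cuv; apply: codes_inj; apply/eqP/ffunP => i; rewrite !ffunE.
have [<-|ci] := eqVneq (c u) i.
  have /eqP-> : gdist_set e u (color_class c (c u)) == 0.
    by rewrite gdist_set_eq0 mem_color_class.
  by apply/esym/eqP; rewrite gdist_set_eq0 inE cuv.
apply: eq_bigr => x; rewrite inE => /eqP cx.
by apply: twins_gdist => //; apply: contraNneq ci => x_eq; rewrite -cx x_eq ?cuv eqxx.
Qed.

End LocatingColoring.

Section LocatingChromaticNumber.
Variables (T : finType) (e : rel T).

Lemma chiL_le m : m <= #|T| -> loc_colorable e m -> chiL e <= m.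
Proof.
move=> m_le colm; rewrite /chiL leqNgt; apply/negP => /(before_find 0).
by rewrite nth_iota ?ltnS // add0n colm.
Qed.

Lemma loc_colorable_card : irreflexive e -> loc_colorable e #|T|.
Proof.
move=> e_irr; pose c : {ffun T -> 'I_#|T|} := [ffun x => enum_rank x].
have c_inj : injective c by move=> u v; rewrite !ffunE; apply: enum_rank_inj.
apply/existsP; exists c; apply/and3P; split.
- apply/forallP => u; apply/forallP => v; apply/implyP; apply: contraL.
  by rewrite (inj_eq c_inj) => /eqP->; rewrite e_irr.
- apply/forallP => i; apply/set0Pn; exists (enum_val i).
  by rewrite inE ffunE enum_valK.
apply/forallP => u; apply/forallP => v; apply/implyP; apply: contraLR => uv.
by apply: color_code_neq; rewrite (inj_eq c_inj).
Qed.

Lemma loc_colorable_chiL : irreflexive e -> loc_colorable e (chiL e).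
Proof.
move=> e_irr; have has_col : has (loc_colorable e) (iota 0 #|T|.+1).
  by apply/hasP; exists #|T|; [rewrite mem_iota add0n ltnSn | exact: loc_colorable_card].
have := nth_find 0 has_col; rewrite nth_iota ?add0n //.
by rewrite -[X in _ < X](size_iota 0 #|T|.+1) -has_find.
Qed.

Lemma size_le_loc_colorable (s : seq T) k : uniq s ->
  {in s &, forall u v, u != v -> e u v \/ twins e u v} ->
  loc_colorable e k -> size s <= k.
Proof.
move=> s_uniq s_sep /existsP[c c_loc].
have cs_uniq : uniq (map c s).
  rewrite map_inj_in_uniq // => u v us vs cuv; apply/eqP; apply: contraT => uv.
  have [euv|tw] := s_sep u v us vs uv.
    by have := locating_proper c_loc euv; rewrite cuv eqxx.
  by have := locating_twins c_loc uv tw; rewrite cuv eqxx.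
by rewrite -(size_map c) -(card_uniqP cs_uniq) -[leqRHS]card_ord max_card.
Qed.

Lemma chiL_eq_size (s : seq T) : irreflexive e -> uniq s ->
  {in s &, forall u v, u != v -> e u v \/ twins e u v} ->
  size s <= #|T| -> loc_colorable e (size s) -> chiL e = size s.
Proof.
move=> e_irr s_uniq s_sep s_le col_s; apply/eqP; rewrite eqn_leq chiL_le //=.
exact: size_le_loc_colorable (loc_colorable_chiL e_irr).
Qed.

End LocatingChromaticNumber.

Lemma existsb_sum (A B : finType) (P : pred (A + B)) :
  [exists x, P x] = [exists a, P (inl a)] || [exists b, P (inr b)].
Proof.
apply/existsP/orP => [[[a|b] Px]|[/existsP[a Pa]|/existsP[b Pb]]]; last 2 first.
- by exists (inl a).
- by exists (inr b).
- by left; apply/existsP; exists a.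
by right; apply/existsP; exists b.
Qed.

Lemma existsb_prod (A B : finType) (P : pred (A * B)) :
  [exists x, P x] = [exists a, [exists b, P (a, b)]].
Proof.
apply/existsP/existsP => [[[a b] Pab]|[a /existsP[b Pab]]]; last by exists (a, b).
by exists a; apply/existsP; exists b.
Qed.

Lemma existsb_option (A : finType) (P : pred (option A)) :
  [exists x, P x] = P None || [exists a, P (Some a)].
Proof.
apply/existsP/orP => [[[a|] Px]|[PN|/existsP[a Pa]]]; last 2 first.
- by exists None.
- by exists (Some a).
- by right; apply/existsP; exists a.
by left.
Qed.

Lemma existsb_bool (P : pred bool) : [exists b, P b] = P true || P false.
Proof.
by apply/existsP/orP => [[[] Pb]|[Pb|Pb]]; [left | right | exists true | exists false].
Qed.

Definition K2 : rel bool := fun a b => a != b.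
Definition P3 : rel (option bool) := fun x y => (x == None) != (y == None).

(* Unlike [inord], this reduces, so colour comparisons compute. *)
Definition ord4 (n : nat) : 'I_4 := Ordinal (ltn_pmod n (isT : 0 < 4)).

Definition corona_coloring : {ffun bool + bool * option bool -> 'I_4} :=
  [ffun x => ord4 match x with
  | inl true | inr (false, Some true) => 0
  | inl false | inr (true, Some true) => 1
  | inr (true, None) | inr (false, Some false) => 2
  | inr (true, Some false) | inr (false, None) => 3
  end].

Lemma card_corona : #|{: (bool + bool * option bool)%type}| = 8.
Proof. by rewrite card_sum card_prod card_option card_bool. Qed.

Lemma corona_coloring_locating : locating_coloring (corona_rel K2 P3) corona_coloring.
Proof.
apply: locating_coloring_nbhd; first by rewrite card_corona.
- by move=> u v; rewrite !ffunE; case: u => [[]|[[] [[]|]]]; case: v => [[]|[[] [[]|]]] //=.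
- move=> [[|[|[|[|n]]]] lt_i4] //;
    [exists (inl true) | exists (inl false)
    | exists (inr (true, None)) | exists (inr (false, None))];
    by rewrite ffunE; apply/val_inj.
move=> u v; rewrite !ffunE.
case: u => [[]|[[] [[]|]]]; case: v => [[]|[[] [[]|]]] //= _ _;
  [> exists (ord4 2) | exists (ord4 3) | exists (ord4 3) | exists (ord4 1)
   | exists (ord4 0) | exists (ord4 2) | exists (ord4 0) | exists (ord4 1)];
  by rewrite /nbhd_has_color !existsb_sum !existsb_prod !existsb_bool
             !existsb_option !existsb_bool !ffunE.
Qed.

Lemma chiL_corona : chiL (corona_rel K2 P3) = 4.
Proof.
apply: (@chiL_eq_size _ _
  [:: inl true; inr (true, None); inr (true, Some true); inr (true, Some false)]) => //.
- by case=> [[]|[[] [[]|]]].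
- move=> u v; rewrite !inE => /or4P[]/eqP-> /or4P[]/eqP-> //= _;
    by [left | right; case=> [[]|[[] [[]|]]]].
- by rewrite card_corona.
by apply/existsP; exists corona_coloring; apply: corona_coloring_locating.
Qed.

Lemma chiL_cone_P3 : chiL_cone P3 setT = 4.
Proof.
pose v x : {x : option bool | x \in [set: option bool]} := exist _ x (in_setT x).
have card_cone : #|{: option {x : option bool | x \in [set: option bool]}}| = 4.
  by rewrite card_option card_sig cardsT card_option card_bool.
have cone_irr : irreflexive (@cone_rel _ P3 setT) by case=> [[[[]|] ?]|].
rewrite /chiL_cone (@chiL_eq_size _ _
  [:: None; Some (v None); Some (v (Some true)); Some (v (Some false))]) //.
- move=> x y; rewrite !inE => /or4P[]/eqP-> /or4P[]/eqP-> //= _;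
    by [left | right; case=> [[[[]|] ?]|]].
- by rewrite card_cone.
by rewrite [size _]/= -card_cone; apply: loc_colorable_card.
Qed.

Lemma P3_connected x y : connect P3 x y.
Proof.
have centre z : connect P3 z None /\ connect P3 None z.
  by case: z => [b|]; split; rewrite ?connect0 // connect1.
exact: connect_trans (proj1 (centre x)) (proj2 (centre y)).
Qed.

Lemma components_P3 : components P3 = [set setT].
Proof.
apply/setP => C; rewrite !inE; apply/imsetP/eqP => [[z _ ->]|->]; last exists None => //;
  by apply/setP => y; rewrite !inE P3_connected.
Qed.

Theorem theorem2 :
  exists (T : finType) (e : rel T) (U : finType) (f : rel U),
    [/\ simple_graph e, connected_graph e, 2 <= #|T|, simple_graph f
      & (0 < #|U|) /\
        chiL (corona_rel e f) = \max_(C in components f) chiL_cone f C].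
Proof.
exists bool, K2, (option bool), P3; split.
- by split; [move=> a; rewrite /K2 eqxx | move=> a b; rewrite /K2 eq_sym].
- by move=> [] []; rewrite ?connect0 // connect1.
- by rewrite card_bool.
- by split; [move=> x; rewrite /P3 eqxx | move=> x y; rewrite /P3 eq_sym].
split; first by rewrite card_option card_bool.
by rewrite components_P3 big_set1 chiL_cone_P3 chiL_corona.
Qed.
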